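(* For all contexts $\Gamma,\Delta$ and terms $M,A,B$: if $\Gamma\approx_\alpha\Delta$, $A\sim_\alpha B$ and $\Gamma\vdash M:A$, then $\Delta\vdash M:B$.
   Context: Let $\mathcal V$ (the variables) be a type with decidable equality, equipped with functions $\mathrm{encode}:\mathcal V\to\mathbb N$ and $\mathrm{decode}:\mathbb N\to\mathcal V$ such that $\mathrm{encode}(\mathrm{decode}\,n)=n$ for all $n$. Let $\mathcal C$ (the constants) be any type. Terms $\Lambda$ are generated by: $c\,k$ ($k\in\mathcal C$), $v\,x$ ($x\in\mathcal V$), $\lambda[x:A]M$, $\Pi[x:A]B$ and $M\cdot N$; in $\lambda[x:A]M$ and $\Pi[x:A]B$ the name $x$ binds in $M$ (resp. $B$) but not in $A$. Terms are raw first-order syntax (not identified up to renaming of bound variables) and $\equiv$ denotes syntactic identity. The list of free variables is $\mathrm{fv}(c\,k)=[\,]$, $\mathrm{fv}(v\,x)=[x]$, $\mathrm{fv}(\lambda[x:A]M)=\mathrm{fv}\,A\mathbin{+\!\!+}(\mathrm{fv}\,M-x)$, $\mathrm{fv}(\Pi[x:A]B)=\mathrm{fv}\,A\mathbin{+\!\!+}(\mathrm{fv}\,B-x)$, $\mathrm{fv}(M\cdot N)=\mathrm{fv}\,M\mathbin{+\!\!+}\mathrm{fv}\,N$, where $\mathbin{+\!\!+}$ is list concatenation and $xs-x$ deletes every occurrence of $x$ from $xs$. Fix a function $\chi':\mathrm{List}\,\mathbb N\to\mathbb N$ with $\chi'(ns)\notin ns$ for every list $ns$, and put $X'(xs)=\mathrm{decode}(\chi'(\mathrm{map}\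 \mathrm{encode}\ xs))$. A substitution is any function $\sigma:\mathcal V\to\Lambda$; $\iota=v$ is the identity substitution; $(\sigma,x:=N)(y)=N$ if $y=x$ and $\sigma\,y$ otherwise. For a substitution $\sigma$ and a list $xs$ of variables, $X(\sigma,xs)=X'(\text{concatenation of the lists }\mathrm{fv}(\sigma\,y)\text{ for }y\in xs)$. The action $M\bullet\sigma$ is defined by structural recursion: $c\,k\bullet\sigma=c\,k$; $v\,x\bullet\sigma=\sigma\,x$; $(M\cdot N)\bullet\sigma=(M\bullet\sigma)\cdot(N\bullet\sigma)$; $(\lambda[x:A]M)\bullet\sigma=\lambda[y:A\bullet\sigma](M\bullet(\sigma,x:=v\,y))$ with $y=X(\sigma,\mathrm{fv}\,M-x)$; $(\Pi[x:A]B)\bullet\sigma=\Pi[y:A\bullet\sigma](B\bullet(\sigma,x:=v\,y))$ with $y=X(\sigma,\mathrm{fv}\,B-x)$. Unary substitution is $M[x:=N]=M\bullet(\iota,x:=N)$. $\alpha$-conversion $\sim_\alpha$ is the inductively defined relation with rules: $c\,k\sim_\alpha c\,k$; $v\,x\sim_\alpha v\,x$; $M\cdot N\sim_\alpha M'\cdot N'$ if $M\sim_\alpha M'$ and $N\sim_\alpha N'$; $\lambda[x:A]M\sim_\alpha\lambda[x':A']M'$ if $A\sim_\alpha A'$ and there is a variable $y$ with $y\notin\mathrm{fv}\,M-x$, $y\notin\mathrm{fv}\,M'-x'$ and $M[x:=v\,y]\equiv M'[x':=v\,y]$; and the same rule with $\Pi$ in place of $\lambda$. $\beta$-contraction is $(\lambda[x:A]M)\cdot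 N\ \triangleright_\beta\ M[x:=N]$. One-step $\beta$-reduction $\to_\beta$ is its contextual closure, inductively: $M\to_\beta N$ if $M\triangleright_\beta N$; $\lambda[x:A]M\to_\beta\lambda[x:A]M'$ and $\Pi[x:A]M\to_\beta\Pi[x:A]M'$ if $M\to_\beta M'$; $\lambda[x:A]M\to_\beta\lambda[x:A']M$ and $\Pi[x:A]M\to_\beta\Pi[x:A']M$ if $A\to_\beta A'$; $M\cdot P\to_\beta N\cdot P$ and $P\cdot M\to_\beta P\cdot N$ if $M\to_\beta N$. $\beta$-conversion $\simeq_\beta$ is the equivalence (reflexive–symmetric–transitive) closure of $\sim_\alpha\cup\to_\beta$. Pure Type System: fix a binary relation $\mathcal A\subseteq\mathcal C\times\mathcal C$ (axioms) and a ternary relation $\mathcal R\subseteq\mathcal C\times\mathcal C\times\mathcal C$ (rules). A context is a finite list of pairs $(x,A)$ with $x\in\mathcal V$, $A\in\Lambda$; $\Gamma,x:A$ denotes the list $(x,A)::\Gamma$; $\mathrm{dom}\,\Gamma$ is the list of first components; $(x,A)\in\Gamma$ is list membership. The judgments $\Gamma\ \mathrm{ok}$ and $\Gamma\vdash M:A$ are defined mutually inductively by: (nil) $[\,]\ \mathrm{ok}$; (cons) if $\Gamma\ \mathrm{ok}$, $\Gamma\vdash A:c\,s$ and $x\notin\mathrm{dom}\,\Gamma$ then $\Gamma,x:A\ \mathrm{ok}$; (sort) if $\Gamma\ \mathrm{ok}$ and $\mathcal A\,s_1\,s_2$ then $\Gamma\vdash c\,s_1:c\,s_2$; (var) if $\Gamma\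 \mathrm{ok}$ and $(x,A)\in\Gamma$ then $\Gamma\vdash v\,x:A$; (prod) if $\mathcal R\,s_1\,s_2\,s_3$, $\Gamma\vdash A:c\,s_1$ and for every $y\notin\mathrm{dom}\,\Gamma$, $\Gamma,y:A\vdash B[x:=v\,y]:c\,s_2$, then $\Gamma\vdash\Pi[x:A]B:c\,s_3$; (abs) if $\mathcal R\,s_1\,s_2\,s_3$, $\Gamma\vdash A:c\,s_1$, for every $z\notin\mathrm{dom}\,\Gamma$, $\Gamma,z:A\vdash B[y:=v\,z]:c\,s_2$, and for every $z\notin\mathrm{dom}\,\Gamma$, $\Gamma,z:A\vdash M[x:=v\,z]:B[y:=v\,z]$, then $\Gamma\vdash\lambda[x:A]M:\Pi[y:A]B$; (app) if $\Gamma\vdash M:\Pi[x:A]B$, $\Gamma\vdash N:A$ and $\Gamma\vdash B[x:=N]:c\,s$ for some $s$, then $\Gamma\vdash M\cdot N:B[x:=N]$; (conv) if $\Gamma\vdash M:A$, $A\simeq_\beta B$ and $\Gamma\vdash B:c\,s$ for some $s$, then $\Gamma\vdash M:B$. (The premises quantified over all fresh names in (prod) and (abs) are infinitely branching.) $\Gamma\approx_\alpha\Delta$ means: $\Gamma$ and $\Delta$ have the same length and, position by position, the entries $(x,A)$ of $\Gamma$ and $(y,B)$ of $\Delta$ satisfy $x=y$ and $A\sim_\alpha B$. *)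

From Stdlib Require Import List Relations.
Import ListNotations.
Set Implicit Arguments.

Record Vars := {
  var :> Type;
  var_eq_dec : forall x y : var, {x = y} + {x <> y};
  encode : var -> nat;
  decode : nat -> var;
  encode_decode : forall n, encode (decode n) = n;
  chi' : list nat -> nat;
  chi'_fresh : forall ns, ~ In (chi' ns) ns
}.

Inductive term (V : Vars) (C : Type) : Type :=
| tc : C -> term V C
| tv : V -> term V C
| tlam : V -> term V C -> term V C -> term V C
| tpi : V -> term V C -> term V C -> term V C
| tapp : term V C -> term V C -> term V C.

Arguments tc {V C} _.
Arguments tv {V C} _.
Arguments tlam {V C} _ _ _.
Arguments tpi {V C} _ _ _.
Arguments tapp {V C} _ _.

Section Syntax.
Context {V : Vars} {C : Type}.

Definition del (xs : list V) (x : V) : list V := remove (var_eq_dec V) x xs.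

Fixpoint fv (M : term V C) : list V :=
  match M with
  | tc _ => []
  | tv x => [x]
  | tlam x A M => fv A ++ del (fv M) x
  | tpi x A B => fv A ++ del (fv B) x
  | tapp M N => fv M ++ fv N
  end.

Definition X' (xs : list V) : V := decode V (chi' V (map (encode V) xs)).

Definition subst_t := V -> term V C.

Definition iota : subst_t := fun x => tv x.

Definition upd (s : subst_t) (x : V) (N : term V C) : subst_t :=
  fun y => if var_eq_dec V y x then N else s y.

Definition Xs (s : subst_t) (xs : list V) : V :=
  X' (flat_map (fun y => fv (s y)) xs).

Fixpoint act (M : term V C) (s : subst_t) : term V C :=
  match M with
  | tc k => tc k
  | tv x => s x
  | tapp M N => tapp (act M s) (act N s)
  | tlam x A M =>
      let y := Xs s (del (fv M) x) in
      tlam y (act A s) (act M (upd s x (tv y)))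
  | tpi x A B =>
      let y := Xs s (del (fv B) x) in
      tpi y (act A s) (act B (upd s x (tv y)))
  end.

Definition usubst (M : term V C) (x : V) (N : term V C) : term V C :=
  act M (upd iota x N).

Inductive alpha : term V C -> term V C -> Prop :=
| alpha_c : forall k, alpha (tc k) (tc k)
| alpha_v : forall x, alpha (tv x) (tv x)
| alpha_app : forall M N M' N', alpha M M' -> alpha N N' ->
    alpha (tapp M N) (tapp M' N')
| alpha_lam : forall x A M x' A' M' y, alpha A A' ->
    ~ In y (del (fv M) x) -> ~ In y (del (fv M') x') ->
    usubst M x (tv y) = usubst M' x' (tv y) ->
    alpha (tlam x A M) (tlam x' A' M')
| alpha_pi : forall x A M x' A' M' y, alpha A A' ->
    ~ In y (del (fv M) x) -> ~ In y (del (fv M') x') ->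
    usubst M x (tv y) = usubst M' x' (tv y) ->
    alpha (tpi x A M) (tpi x' A' M').

Inductive beta_contr : term V C -> term V C -> Prop :=
| beta_c : forall x A M N, beta_contr (tapp (tlam x A M) N) (usubst M x N).

Inductive beta : term V C -> term V C -> Prop :=
| beta_top : forall M N, beta_contr M N -> beta M N
| beta_lam_body : forall x A M M', beta M M' -> beta (tlam x A M) (tlam x A M')
| beta_pi_body : forall x A M M', beta M M' -> beta (tpi x A M) (tpi x A M')
| beta_lam_dom : forall x A A' M, beta A A' -> beta (tlam x A M) (tlam x A' M)
| beta_pi_dom : forall x A A' M, beta A A' -> beta (tpi x A M) (tpi x A' M)
| beta_appl : forall M N P, beta M N -> beta (tapp M P) (tapp N P)
| beta_appr : forall M N P, beta M N -> beta (tapp P M) (tapp P N).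

Definition alpha_or_beta (M N : term V C) : Prop := alpha M N \/ beta M N.

Definition beta_conv : term V C -> term V C -> Prop :=
  clos_refl_sym_trans (term V C) alpha_or_beta.

Definition context := list (V * term V C).

Definition dom (G : context) : list V := map fst G.

Definition alpha_ctx (G D : context) : Prop :=
  Forall2 (fun p q => fst p = fst q /\ alpha (snd p) (snd q)) G D.

End Syntax.

Section PTS.
Context {V : Vars} {C : Type}.
Variable Ax : C -> C -> Prop.
Variable Rl : C -> C -> C -> Prop.

Inductive wf : @context V C -> Prop :=
| wf_nil : wf []
| wf_cons : forall G x A s, wf G -> typ G A (tc s) -> ~ In x (dom G) ->
    wf ((x, A) :: G)
with typ : @context V C -> term V C -> term V C -> Prop :=
| typ_sort : forall G s1 s2, wf G -> Ax s1 s2 -> typ G (tc s1) (tc s2)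
| typ_var : forall G x A, wf G -> In (x, A) G -> typ G (tv x) A
| typ_prod : forall G x A B s1 s2 s3, Rl s1 s2 s3 -> typ G A (tc s1) ->
    (forall y, ~ In y (dom G) -> typ ((y, A) :: G) (usubst B x (tv y)) (tc s2)) ->
    typ G (tpi x A B) (tc s3)
| typ_abs : forall G x y A B M s1 s2 s3, Rl s1 s2 s3 -> typ G A (tc s1) ->
    (forall z, ~ In z (dom G) -> typ ((z, A) :: G) (usubst B y (tv z)) (tc s2)) ->
    (forall z, ~ In z (dom G) ->
       typ ((z, A) :: G) (usubst M x (tv z)) (usubst B y (tv z))) ->
    typ G (tlam x A M) (tpi y A B)
| typ_app : forall G M N x A B s, typ G M (tpi x A B) -> typ G N A ->
    typ G (usubst B x N) (tc s) -> typ G (tapp M N) (usubst B x N)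
| typ_conv : forall G M A B s, typ G M A -> beta_conv A B -> typ G B (tc s) ->
    typ G M B.

End PTS.

(* [act] renames each binder to a name computed from the free variables of
   the substituted body alone.  Alpha-equivalent terms have the same free
   variables and bodies that agree after renaming, so [act] sends them to
   syntactically equal terms; hence substitution instances such as B[x:=N]
   respect alpha-conversion.  Typing is then shown stable under alpha-conversion
   of context, subject and type simultaneously, by mutual induction on context
   formation and typing: each rule is re-applied to the converted components,
   and the remaining discrepancy in the type is absorbed by the conversion rule,
   since alpha-conversion is contained in beta-conversion. *)

From Stdlib Require Import List Relations.
Import ListNotations.
Unset Implicit Arguments.

Lemma flat_map_ext_in {A B} (f g : A -> list B) (l : list A) :
  (forall x, In x l -> f x = g x) -> flat_map f l = flat_map g l.
Proof.
  induction l as [|a l IH]; intros H; simpl; auto.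
  rewrite H, IH; simpl; auto. intros; apply H; simpl; auto.
Qed.

Lemma flat_map_flat_map {A B D} (f : B -> list D) (g : A -> list B) (l : list A) :
  flat_map f (flat_map g l) = flat_map (fun x => flat_map f (g x)) l.
Proof. induction l; simpl; auto. rewrite flat_map_app; congruence. Qed.

Lemma flat_map_singleton {A} (l : list A) : flat_map (fun v => [v]) l = l.
Proof. induction l; simpl; congruence. Qed.

Section Substitution.
Context {V : Vars} {C : Type}.
Notation tm := (term V C).

Lemma X'_fresh (xs : list V) : ~ In (X' xs) xs.
Proof.
  intros H. apply (chi'_fresh V (map (encode V) xs)).
  unfold X' in H. rewrite <- (encode_decode V (chi' V _)). exact (in_map _ _ _ H).
Qed.

Lemma fresh_for2 (l1 l2 : list V) : exists y, ~ In y l1 /\ ~ In y l2.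
Proof.
  exists (X' (l1 ++ l2)).
  split; intro H; apply (X'_fresh (l1 ++ l2)); apply in_or_app; auto.
Qed.

Lemma Xs_fresh (s : @subst_t V C) (xs : list V) v : In v xs -> ~ In (Xs s xs) (fv (s v)).
Proof.
  intros Hv H. apply (X'_fresh (flat_map (fun y => fv (s y)) xs)).
  apply in_flat_map. eauto.
Qed.

Lemma upd_eq (s : @subst_t V C) x (N : tm) : upd s x N x = N.
Proof. unfold upd. destruct (var_eq_dec V x x); congruence. Qed.

Lemma upd_neq (s : @subst_t V C) x y (N : tm) : y <> x -> upd s x N y = s y.
Proof. unfold upd. destruct (var_eq_dec V y x); congruence. Qed.

Lemma in_del (xs : list V) x v : In v xs -> v <> x -> In v (del xs x).
Proof. intros; apply in_in_remove; auto. Qed.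

Lemma del_flat_map (f : V -> list V) (x y : V) (xs : list V) :
  f x = [y] -> (forall v, In v xs -> v <> x -> ~ In y (f v)) ->
  del (flat_map f xs) y = flat_map f (del xs x).
Proof.
  intros Hx. induction xs as [|a xs IH]; intros H; simpl; auto.
  unfold del in *. rewrite remove_app. simpl.
  destruct (var_eq_dec V x a) as [<-|n].
  - rewrite Hx. simpl. destruct (var_eq_dec V y y); [|congruence].
    apply IH. intros; apply H; simpl; auto.
  - destruct (var_eq_dec V a x); [congruence|]. simpl.
    rewrite notin_remove by (apply H; simpl; auto).
    f_equal. apply IH. intros; apply H; simpl; auto.
Qed.

Lemma act_ext (M : tm) (s s' : @subst_t V C) :
  (forall v, In v (fv M) -> s v = s' v) -> act M s = act M s'.
Proof.
  revert s s'.
  induction M as [k|x|x A IHA M IHM|x A IHA M IHM|M IHM N IHN];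
    intros s s' H; simpl in *; auto.
  3: f_equal; [apply IHM|apply IHN]; intros; apply H; apply in_or_app; auto.
  all: assert (Hy : Xs s (del (fv M) x) = Xs s' (del (fv M) x)) by
         (unfold Xs; f_equal; apply flat_map_ext_in; intros v Hv;
          f_equal; apply H, in_or_app; auto).
  all: rewrite Hy; f_equal; [apply IHA|apply IHM]; intros v Hv;
         [apply H, in_or_app; auto|].
  all: unfold upd; destruct (var_eq_dec V v x); auto;
       apply H, in_or_app; right; apply in_del; auto.
Qed.

(* The name chosen by [act] for the binder is fresh for the images of the
   other free variables of the body, so deleting it removes only the image of
   the binder itself. *)
Lemma fv_act_binder (M : tm) (s : @subst_t V C) x :
  (forall s, fv (act M s) = flat_map (fun v => fv (s v)) (fv M)) ->
  let y := Xs s (del (fv M) x) in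
  del (fv (act M (upd s x (tv y)))) y = flat_map (fun v => fv (s v)) (del (fv M) x).
Proof.
  intros IH y. rewrite IH, (del_flat_map _ x y).
  - apply flat_map_ext_in. intros v Hv. apply in_remove in Hv as [_ Hv].
    rewrite upd_neq; auto.
  - rewrite upd_eq; reflexivity.
  - intros v Hv Hn. rewrite upd_neq by auto. apply Xs_fresh, in_del; auto.
Qed.

Lemma fv_act (M : tm) (s : @subst_t V C) :
  fv (act M s) = flat_map (fun v => fv (s v)) (fv M).
Proof.
  revert s.
  induction M as [k|x|x A IHA M IHM|x A IHA M IHM|M IHM N IHN]; intros s; simpl.
  - reflexivity.
  - rewrite app_nil_r; reflexivity.
  - rewrite flat_map_app, IHA, fv_act_binder; auto.
  - rewrite flat_map_app, IHA, fv_act_binder; auto.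
  - rewrite flat_map_app, IHM, IHN; reflexivity.
Qed.

Lemma fv_act_iota (M : tm) : fv (act M iota) = fv M.
Proof. rewrite fv_act. apply flat_map_singleton. Qed.

Lemma act_act (M : tm) (s t : @subst_t V C) :
  act (act M s) t = act M (fun v => act (s v) t).
Proof.
  revert s t.
  induction M as [k|x|x A IHA M IHM|x A IHA M IHM|M IHM N IHN]; intros s t; simpl.
  1,2: reflexivity.
  3: rewrite IHM, IHN; reflexivity.
  all: set (y := Xs s (del (fv M) x)).
  all: replace (Xs t _) with (Xs (fun v => act (s v) t) (del (fv M) x)) by
         (unfold y, Xs; rewrite fv_act_binder by (intros; apply fv_act);
          rewrite flat_map_flat_map; f_equal; apply flat_map_ext;
          intros; rewrite fv_act; reflexivity).
  all: f_equal; [apply IHA|]; rewrite IHM; apply act_ext; intros v Hv.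
  all: destruct (var_eq_dec V v x) as [->|Hvx];
         [rewrite !upd_eq; simpl; rewrite upd_eq; reflexivity|].
  all: rewrite !upd_neq by auto; apply act_ext; intros u Hu.
  all: apply upd_neq; intros ->; refine (Xs_fresh s (del (fv M) x) v _ Hu); apply in_del; auto.
Qed.

Lemma act_rename (M : tm) x y (s : @subst_t V C) (P : tm) :
  ~ In y (del (fv M) x) ->
  act (usubst M x (tv y)) (upd s y P) = act M (upd s x P).
Proof.
  intros Hy. unfold usubst. rewrite act_act. apply act_ext. intros v Hv.
  destruct (var_eq_dec V v x) as [->|Hvx].
  - rewrite !upd_eq. simpl. apply upd_eq.
  - rewrite !upd_neq by auto. simpl. apply upd_neq.
    intros ->. apply Hy, in_del; auto.
Qed.

Lemma fv_rename (M : tm) x y :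
  ~ In y (del (fv M) x) -> del (fv (usubst M x (tv y))) y = del (fv M) x.
Proof.
  intros Hy. unfold usubst. rewrite fv_act, (del_flat_map _ x y).
  - rewrite <- (flat_map_singleton (del (fv M) x)) at 2.
    apply flat_map_ext_in. intros v Hv. apply in_remove in Hv as [_ Hv].
    rewrite upd_neq; auto.
  - rewrite upd_eq; reflexivity.
  - intros v Hv Hn. rewrite upd_neq by auto. simpl. intros [<-|[]].
    apply Hy, in_del; auto.
Qed.

End Substitution.

Section Alpha.
Context {V : Vars} {C : Type}.
Notation tm := (term V C).

Lemma act_upd_of_rename_eq (M M' : tm) x x' y :
  ~ In y (del (fv M) x) -> ~ In y (del (fv M') x') ->
  usubst M x (tv y) = usubst M' x' (tv y) ->
  forall s P, act M (upd s x P) = act M' (upd s x' P).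
Proof.
  intros Hy Hy' E s P. rewrite <- (act_rename M x y), <- (act_rename M' x' y) by auto.
  rewrite E. reflexivity.
Qed.

Lemma del_fv_of_rename_eq (M M' : tm) x x' y :
  ~ In y (del (fv M) x) -> ~ In y (del (fv M') x') ->
  usubst M x (tv y) = usubst M' x' (tv y) ->
  del (fv M) x = del (fv M') x'.
Proof.
  intros Hy Hy' E. rewrite <- (fv_rename M x y), <- (fv_rename M' x' y), E by auto.
  reflexivity.
Qed.

Lemma alpha_act (M N : tm) : alpha M N -> forall s, act M s = act N s.
Proof.
  induction 1 as [k|z|M N M' N' _ IHM _ IHN
                 |x A M x' A' M' y _ IHA Hy Hy' E|x A M x' A' M' y _ IHA Hy Hy' E];
    intros s; simpl.
  1,2: reflexivity.
  1: rewrite IHM, IHN; reflexivity.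
  all: rewrite (del_fv_of_rename_eq M M' x x' y), IHA by auto.
  all: f_equal; apply (act_upd_of_rename_eq M M' x x' y Hy Hy' E).
Qed.

Lemma alpha_fv (M N : tm) : alpha M N -> fv M = fv N.
Proof.
  intros H. rewrite <- (fv_act_iota M), <- (fv_act_iota N), (alpha_act M N H iota). reflexivity.
Qed.

Lemma alpha_refl (M : tm) : alpha M M.
Proof.
  induction M as [k|x|x A IHA M IHM|x A IHA M IHM|M IHM N IHN].
  all: try (constructor; assumption).
  - apply alpha_lam with (y := X' (del (fv M) x)); auto; apply X'_fresh.
  - apply alpha_pi with (y := X' (del (fv M) x)); auto; apply X'_fresh.
Qed.

Lemma alpha_act_subst (M : tm) (s s' : @subst_t V C) :
  (forall v, alpha (s v) (s' v)) -> alpha (act M s) (act M s').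
Proof.
  revert s s'.
  induction M as [k|x|x A IHA M IHM|x A IHA M IHM|M IHM N IHN];
    intros s s' H; simpl; try solve [constructor; auto | auto].
  all: replace (Xs s' _) with (Xs s (del (fv M) x)) by
         (unfold Xs; f_equal; apply flat_map_ext; intros; apply alpha_fv; auto).
  all: set (y := Xs s (del (fv M) x)).
  all: first [apply alpha_lam with (y := y) | apply alpha_pi with (y := y)].
  all: auto; try apply remove_In.
  all: unfold usubst; rewrite !act_act; apply act_ext; intros v Hv.
  all: destruct (var_eq_dec V v x) as [->|Hvx];
         [rewrite !upd_eq; reflexivity|rewrite !upd_neq by auto; apply alpha_act; auto].
Qed.

Lemma alpha_pi_intro x x' (A A' B B' : tm) :
  alpha A A' -> (forall P, usubst B x P = usubst B' x' P) ->
  alpha (tpi x A B) (tpi x' A' B').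
Proof.
  intros HA E. destruct (fresh_for2 (del (fv B) x) (del (fv B') x')) as [y [Hy Hy']].
  apply alpha_pi with (y := y); auto.
Qed.

Lemma alpha_pi_inv x (A B N : tm) : alpha (tpi x A B) N ->
  exists x' A' B', N = tpi x' A' B' /\ alpha A A' /\
                   forall P, usubst B x P = usubst B' x' P.
Proof.
  inversion 1; subst. exists x', A', M'. repeat split; auto.
  intros P. apply (act_upd_of_rename_eq B M' x x' y); auto.
Qed.

Lemma alpha_lam_inv x (A M N : tm) : alpha (tlam x A M) N ->
  exists x' A' M', N = tlam x' A' M' /\ alpha A A' /\
                   forall P, usubst M x P = usubst M' x' P.
Proof.
  inversion 1; subst. exists x', A', M'. repeat split; auto.
  intros P. apply (act_upd_of_rename_eq M M' x x' y); auto.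
Qed.

Lemma alpha_app_inv (M N P : tm) : alpha (tapp M N) P ->
  exists M' N', P = tapp M' N' /\ alpha M M' /\ alpha N N'.
Proof. inversion 1; subst; eauto. Qed.

Lemma alpha_c_inv k (N : tm) : alpha (tc k) N -> N = tc k.
Proof. inversion 1; reflexivity. Qed.

Lemma alpha_v_inv x (N : tm) : alpha (tv x) N -> N = tv x.
Proof. inversion 1; reflexivity. Qed.

Lemma beta_conv_alpha_alpha (A B B' : tm) : alpha A B -> alpha A B' -> beta_conv B B'.
Proof.
  intros H H'. apply rst_trans with A.
  - apply rst_sym, rst_step. left; exact H.
  - apply rst_step. left; exact H'.
Qed.

Lemma alpha_ctx_dom (G D : @context V C) : alpha_ctx G D -> dom G = dom D.
Proof. induction 1 as [|p q G D [E _] _ IH]; simpl; congruence. Qed.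

Lemma alpha_ctx_In (G D : @context V C) x A : alpha_ctx G D -> In (x, A) G ->
  exists A', In (x, A') D /\ alpha A A'.
Proof.
  induction 1 as [|[x1 A1] [x2 A2] G D [E HA] _ IH]; simpl in *; [tauto|].
  intros [[=<- <-]|Hin]; subst.
  - eauto.
  - destruct (IH Hin) as [A' [? ?]]. eauto.
Qed.

End Alpha.

Scheme wf_mut := Induction for wf Sort Prop
  with typ_mut := Induction for typ Sort Prop.
Combined Scheme wf_typ_mut from wf_mut, typ_mut.

Section Typing.
Context {V : Vars} {C : Type}.
Variable Ax : C -> C -> Prop.
Variable Rl : C -> C -> C -> Prop.
Notation tm := (term V C).
Notation typ := (typ Ax Rl).
Notation wf := (wf Ax Rl).

Lemma typ_weaken (G : @context V C) (M A : tm) : typ G M A ->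
  forall G', incl G G' -> wf G' -> typ G' M A.
Proof.
  assert (Hfresh : forall (G G' : @context V C) z,
            incl G G' -> ~ In z (dom G') -> ~ In z (dom G)).
  { intros G0 G' z Hi Hz Hd. apply Hz. eapply incl_map; eauto. }
  assert (Hcons : forall (G G' : @context V C) p,
            incl G G' -> incl (p :: G) (p :: G')).
  { intros G0 G' p Hi q [<-|Hq]; [left|right]; auto. }
  induction 1; intros G' Hi Hw.
  - constructor; auto.
  - apply typ_var; auto.
  - eapply typ_prod; eauto.
    intros y Hy. apply H2; eauto. econstructor; eauto.
  - eapply typ_abs; eauto; intros z Hz; [apply H2|apply H4]; eauto;
      econstructor; eauto.
  - eapply typ_app; eauto.
  - eapply typ_conv; eauto.
Qed.

(* The context invariant also records that the declared types stay well
   sorted after alpha-conversion: the variable rule needs this to convert. *)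
Definition typ_alpha_stable (G : @context V C) (M A : tm) : Prop :=
  forall D M' A', alpha_ctx G D -> alpha M M' -> alpha A A' -> typ D M' A'.

Definition ctx_alpha_stable (G : @context V C) : Prop :=
  forall D, alpha_ctx G D -> wf D /\
    forall x A A', In (x, A) G -> alpha A A' -> exists s, typ D A' (tc s).

Lemma fresh_alpha_ctx (G D : @context V C) z :
  alpha_ctx G D -> ~ In z (dom D) -> ~ In z (dom G).
Proof. intros HGD. rewrite (alpha_ctx_dom G D HGD). auto. Qed.

Lemma ctx_alpha_stable_nil : ctx_alpha_stable [].
Proof.
  intros D HD. inversion HD; subst. split; [constructor|]. intros ? ? ? [].
Qed.

Lemma ctx_alpha_stable_cons G x (A : tm) s :
  ctx_alpha_stable G -> typ_alpha_stable G A (tc s) -> ~ In x (dom G) ->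
  ctx_alpha_stable ((x, A) :: G).
Proof.
  intros IHG IHA Hx D' HD'.
  inversion HD' as [|[x1 A1] [x2 A2] G1 D HxA HGD]; subst.
  destruct HxA as [Ex HA]; simpl in Ex, HA; subst x2.
  destruct (IHG D HGD) as [wfD HdeclD].
  assert (wfD' : wf ((x, A2) :: D)).
  { apply wf_cons with s; auto.
    - apply IHA; auto using alpha_refl.
    - rewrite <- (alpha_ctx_dom G D HGD); auto. }
  split; auto.
  intros y B B' [[=<- <-]|Hin] HB.
  - exists s. apply typ_weaken with D; auto using incl_tl, incl_refl.
    apply IHA; auto using alpha_refl.
  - destruct (HdeclD y B B' Hin HB) as [s' Hs']. exists s'.
    apply typ_weaken with D; auto using incl_tl, incl_refl.
Qed.

Lemma typ_alpha_stable_sort G s1 s2 :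
  ctx_alpha_stable G -> Ax s1 s2 -> typ_alpha_stable G (tc s1) (tc s2).
Proof.
  intros IHG Hax D M' A' HGD HM HA.
  rewrite (alpha_c_inv s1 M' HM), (alpha_c_inv s2 A' HA).
  constructor; auto. apply (IHG D HGD).
Qed.

Lemma typ_alpha_stable_var G x (A : tm) :
  ctx_alpha_stable G -> In (x, A) G -> typ_alpha_stable G (tv x) A.
Proof.
  intros IHG Hin D M' A' HGD HM HA. rewrite (alpha_v_inv x M' HM).
  destruct (alpha_ctx_In G D x A HGD Hin) as [A0 [Hin0 HA0]].
  destruct (IHG D HGD) as [wfD HdeclD].
  destruct (HdeclD x A A' Hin HA) as [s Hs].
  apply typ_conv with A0 s; auto using typ_var.
  apply beta_conv_alpha_alpha with A; auto.
Qed.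

Lemma typ_alpha_stable_prod G x (A B : tm) s1 s2 s3 :
  Rl s1 s2 s3 -> typ_alpha_stable G A (tc s1) ->
  (forall y, ~ In y (dom G) ->
     typ_alpha_stable ((y, A) :: G) (usubst B x (tv y)) (tc s2)) ->
  typ_alpha_stable G (tpi x A B) (tc s3).
Proof.
  intros Hr IHA IHB D M' A' HGD HM HA. rewrite (alpha_c_inv s3 A' HA).
  destruct (alpha_pi_inv x A B M' HM) as [x' [A1 [B1 [-> [HA1 EB]]]]].
  apply typ_prod with s1 s2; auto.
  - apply IHA; auto using alpha_refl.
  - intros z Hz. apply (IHB z (fresh_alpha_ctx G D z HGD Hz)).
    + constructor; auto.
    + rewrite (EB (tv z)). apply alpha_refl.
    + apply alpha_refl.
Qed.

Lemma typ_alpha_stable_abs G x y (A B M : tm) s1 s2 s3 :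
  Rl s1 s2 s3 -> typ_alpha_stable G A (tc s1) ->
  (forall z, ~ In z (dom G) ->
     typ_alpha_stable ((z, A) :: G) (usubst B y (tv z)) (tc s2)) ->
  (forall z, ~ In z (dom G) ->
     typ_alpha_stable ((z, A) :: G) (usubst M x (tv z)) (usubst B y (tv z))) ->
  typ_alpha_stable G (tlam x A M) (tpi y A B).
Proof.
  intros Hr IHA IHB IHM D M' A' HGD HM HA.
  destruct (alpha_lam_inv x A M M' HM) as [x' [A1 [M1 [-> [HA1 EM]]]]].
  destruct (alpha_pi_inv y A B A' HA) as [y' [A2 [B2 [-> [HA2 EB]]]]].
  assert (HB1 : forall z, ~ In z (dom D) ->
            typ ((z, A1) :: D) (usubst B2 y' (tv z)) (tc s2)).
  { intros z Hz. apply (IHB z (fresh_alpha_ctx G D z HGD Hz)).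
    - constructor; auto.
    - rewrite (EB (tv z)). apply alpha_refl.
    - apply alpha_refl. }
  apply typ_conv with (tpi y' A1 B2) s3.
  - apply typ_abs with s1 s2 s3; auto.
    { apply IHA; auto using alpha_refl. }
    intros z Hz. apply (IHM z (fresh_alpha_ctx G D z HGD Hz)).
    + constructor; auto.
    + rewrite (EM (tv z)). apply alpha_refl.
    + rewrite (EB (tv z)). apply alpha_refl.
  - apply beta_conv_alpha_alpha with (tpi y A B); auto.
    apply alpha_pi_intro; auto.
  - apply (typ_alpha_stable_prod G y A B s1 s2 s3); auto using alpha_refl.
Qed.

Lemma typ_alpha_stable_app G (M N : tm) x (A B : tm) s :
  typ_alpha_stable G M (tpi x A B) -> typ_alpha_stable G N A ->
  typ_alpha_stable G (usubst B x N) (tc s) ->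
  typ_alpha_stable G (tapp M N) (usubst B x N).
Proof.
  intros IHM IHN IHB D M' A' HGD HMN HA.
  destruct (alpha_app_inv M N M' HMN) as [M1 [N1 [-> [HM1 HN1]]]].
  assert (HBN : alpha (usubst B x N) (usubst B x N1)).
  { apply alpha_act_subst. intros v.
    destruct (var_eq_dec V v x) as [->|Hvx].
    - rewrite !upd_eq. exact HN1.
    - rewrite !upd_neq by auto. apply alpha_refl. }
  apply typ_conv with (usubst B x N1) s.
  - apply typ_app with A s.
    + apply IHM; auto using alpha_refl.
    + apply IHN; auto using alpha_refl.
    + apply IHB; auto using alpha_refl.
  - apply beta_conv_alpha_alpha with (usubst B x N); auto.
  - apply IHB; auto using alpha_refl.
Qed.

Lemma typ_alpha_stable_conv G (M A B : tm) s :
  typ_alpha_stable G M A -> beta_conv A B -> typ_alpha_stable G B (tc s) ->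
  typ_alpha_stable G M B.
Proof.
  intros IHM HAB IHB D M' B' HGD HM HB.
  apply typ_conv with A s.
  - apply IHM; auto using alpha_refl.
  - apply rst_trans with B; auto. apply rst_step. left; exact HB.
  - apply IHB; auto using alpha_refl.
Qed.

Lemma typ_alpha_stable_all :
  (forall G, wf G -> ctx_alpha_stable G) /\
  (forall G M A, typ G M A -> typ_alpha_stable G M A).
Proof.
  apply (wf_typ_mut V C Ax Rl (fun G _ => ctx_alpha_stable G)
                          (fun G M A _ => typ_alpha_stable G M A)).
  - exact ctx_alpha_stable_nil.
  - intros; eapply ctx_alpha_stable_cons; eauto.
  - intros; apply typ_alpha_stable_sort; auto.
  - intros; apply typ_alpha_stable_var; auto.
  - intros; eapply typ_alpha_stable_prod; eauto.
  - intros; eapply typ_alpha_stable_abs; eauto.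
  - intros; eapply typ_alpha_stable_app; eauto.
  - intros; eapply typ_alpha_stable_conv; eauto.
Qed.

End Typing.

Theorem mainTheorem15 (V : Vars) (C : Type)
  (Ax : C -> C -> Prop) (Rl : C -> C -> C -> Prop)
  (G D : @context V C) (M A B : term V C) :
  alpha_ctx G D -> alpha A B -> typ Ax Rl G M A -> typ Ax Rl D M B.
Proof.
  intros HGD HAB HM.
  apply (proj2 (typ_alpha_stable_all Ax Rl) G M A HM D M B HGD (alpha_refl M) HAB).
Qed.
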